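(* Let $\mu>0$ and $w\in W^{1,\infty}_{0,\mu}$, and define $v(t)=e^{-t\partial_x^3}w^\vee$, i.e. $v(t,x)=\frac1{2\pi}\int_{\mathbb R}e^{ix\xi+it\xi^3}w(\xi)\,d\xi$. Then for $0<t_0<t_1$ and $R\ge1$, $$\forall t\in[t_0,t_1],\qquad\|v(t)\|_{W^{1,\infty}([-R,R])}\lesssim_{t_0,t_1}R^2\|w\|_{W^{1,\infty}_{0,\mu}}.$$
   Context: $\langle\xi\rangle=(1+\xi^2)^{1/2}$; $\|w\|_{W^{1,\infty}_{0,\mu}}=\|w\|_{L^\infty(\mathbb R)}+\|\langle\xi\rangle^\mu\partial_\xi w\|_{L^\infty(\mathbb R)}$. The integral defining $v$ is understood in the oscillatory/distributional sense. *)

From Stdlib Require Import Reals.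
From Coquelicot Require Import Coquelicot.
Open Scope R_scope.

Definition jbr (xi : R) : R := sqrt (1 + xi ^ 2).
Definition jbr_negpow (mu xi : R) : R := Rpower (1 + xi ^ 2) (- mu / 2).

Definition expi (theta : R) : C := (cos theta, sin theta).

(* The (A,B)-bound for the W^{1,oo}_{0,mu} norm:
   ||w||_{L^oo} <= A  (w is continuous, so ess sup = sup), and
   ||<xi>^mu d_xi w||_{L^oo} <= B, written in integrated form:
   for a <= b, |w b - w a| <= B * int_a^b <xi>^(-mu) dxi.
   Then ||w||_{W^{1,oo}_{0,mu}} = inf A + inf B over admissible A, B. *)
Definition W1inf0mu_bound (mu : R) (w : R -> C) (A B : R) : Prop :=
  (forall xi, Cmod (w xi) <= A) /\
  (forall a b, a <= b ->
     Cmod (w b - w a) <= B * RInt (jbr_negpow mu) a b).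

Definition airy_integrand (w : R -> C) (t x : R) (xi : R) : C :=
  @scal R_Ring C_R_ModuleSpace (1 / (2 * PI)) (expi (x * xi + t * xi ^ 3) * w xi)%C.

(* The oscillatory integral v(t,x) = (1/2pi) int e^{i x xi + i t xi^3} w(xi) dxi,
   understood as the limit of the symmetric truncations over [-N, N], N -> +oo. *)
Definition osc_integral_is (f : R -> C) (l : C) : Prop :=
  filterlim (fun N : R => @RInt C_R_CompleteNormedModule f (- N) N) (Rbar_locally p_infty) (locally l).

(* Folding the oscillatory integral onto [0, oo) gives
     v(x) = int_0^oo (e^{i phi(xi)} U(xi) + e^{-i phi(xi)} U(-xi)) dxi,
   with phi(xi) = x xi + t xi^3 and U = w / 2pi.
   For |x| <= R the phase is non-stationary beyond xi0 = 1 + R/t0, where |phi'(xi)| >= 2 t0 xi^2, and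
   one integration by parts, e^{i phi} = (e^{i phi} / (i phi'))' + (phi'' / (i phi'^2)) e^{i phi},
   bounds the tail beyond a by (A + B) (1/a + a^{-mu}) up to constants, also with the extra factor xi
   coming from d/dx.  As w is only known through |w d - w c| <= B int_c^d <xi>^{-mu}, the integration
   by parts is carried out on Riemann-type subdivisions.  So both integrals converge, uniformly in
   |x| <= R, which makes v differentiable with v' the second integral, and the part over [0, xi0] is
   at most 2 A xi0^2 <= 2 A (1 + 1/t0)^2 R^2. *)

From Stdlib Require Import Reals Lra Psatz Lia ClassicalEpsilon.
From Coquelicot Require Import Coquelicot.
Open Scope R_scope.

Local Notation continuous_C := (@continuous R_UniformSpace C_R_NormedModule).
Local Notation is_derive_C := (@is_derive R_AbsRing C_R_NormedModule).
Local Notation CRInt := (@RInt C_R_CompleteNormedModule).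
Local Notation ex_CRInt := (@ex_RInt C_R_CompleteNormedModule).

(* [ring] does not see through the [CompleteNormedModule] coercion of [RInt] terms. *)
Ltac ring_C :=
  repeat match goal with |- context [@RInt ?V ?f ?a ?b] =>
    let I := fresh "I" in set (I := @RInt V f a b); clearbody I; change C in I end;
  match goal with |- ?x = ?y => change (@eq C x y) end; ring.

Lemma Rabs_fst_le_Cmod (z : C) : Rabs (fst z) <= Cmod z.
Proof. eapply Rle_trans; [apply Rmax_l | apply Rmax_Cmod]. Qed.

Lemma Rabs_snd_le_Cmod (z : C) : Rabs (snd z) <= Cmod z.
Proof. eapply Rle_trans; [apply Rmax_r | apply Rmax_Cmod]. Qed.

Lemma Cmod_le_Rabs_fst_snd (z : C) : Cmod z <= Rabs (fst z) + Rabs (snd z).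
Proof.
  destruct z as [a b]. unfold Cmod; simpl.
  pose proof (Rabs_pos a); pose proof (Rabs_pos b).
  rewrite <- (sqrt_Rsqr (Rabs a + Rabs b)) by lra.
  apply sqrt_le_1_alt. unfold Rsqr.
  assert (a * a = Rabs a * Rabs a) by (rewrite <- Rabs_mult, Rabs_pos_eq; nra).
  assert (b * b = Rabs b * Rabs b) by (rewrite <- Rabs_mult, Rabs_pos_eq; nra).
  nra.
Qed.

Lemma Cmod_sub_le (x y : C) : Cmod (x - y) <= Cmod x + Cmod y.
Proof. unfold Cminus. rewrite <- (Cmod_opp y). apply Cmod_triangle. Qed.

Lemma Cmod_sub_sym (x y : C) : Cmod (x - y) = Cmod (y - x).
Proof. rewrite <- Cmod_opp. f_equal. ring. Qed.

Lemma Cmod_expi s : Cmod (expi s) = 1.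
Proof.
  unfold Cmod, expi; simpl fst; simpl snd. rewrite <- sqrt_1. f_equal.
  pose proof (sin2_cos2 s) as Hs. unfold Rsqr in Hs. nra.
Qed.

Lemma expi_add a b : expi (a + b) = (expi a * expi b)%C.
Proof.
  unfold expi, Cmult; simpl. rewrite cos_plus, sin_plus.
  apply injective_projections; simpl; ring.
Qed.

Lemma exp_le x y : x <= y -> exp x <= exp y.
Proof. intros [H | ->]; [left; apply exp_increasing, H | right; reflexivity]. Qed.

Lemma continuous_C_iff (f : R -> C) x :
  continuous_C f x <->
  continuous (fun y => fst (f y)) x /\ continuous (fun y => snd (f y)) x.
Proof.
  split.
  - intros Hf. split; apply (continuous_comp f _ x Hf); destruct (f x).
    + apply (continuous_fst (U:=R_UniformSpace) (V:=R_UniformSpace)).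
    + apply (continuous_snd (U:=R_UniformSpace) (V:=R_UniformSpace)).
  - intros [H1 H2].
    apply (continuous_ext (fun y => (fst (f y), snd (f y)))).
    { intros y. destruct (f y); reflexivity. }
    apply (continuous_comp_2 (U:=R_UniformSpace) (V:=R_UniformSpace) (W:=R_UniformSpace)
      (X:=C_R_NormedModule) _ _ (fun a b => (a, b)) x H1 H2).
    apply (continuous_ext (fun p => p)); [intros [a b]; reflexivity | apply continuous_id].
Qed.

Lemma is_derive_C_iff (f : R -> C) x (l : C) :
  is_derive_C f x l <->
  is_derive (fun y => fst (f y)) x (fst l) /\ is_derive (fun y => snd (f y)) x (snd l).
Proof.
  unfold is_derive. split.
  - intros Hf. split.
    + apply (filterdiff_ext_lin _ (fun y : R_AbsRing => fst (scal y l))); [|destruct l; reflexivity].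
      apply (filterdiff_comp f (fun z : C_R_NormedModule => fst z) _ _ Hf).
      apply filterdiff_linear, (is_linear_fst (U:=R_NormedModule) (V:=R_NormedModule)).
    + apply (filterdiff_ext_lin _ (fun y : R_AbsRing => snd (scal y l))); [|destruct l; reflexivity].
      apply (filterdiff_comp f (fun z : C_R_NormedModule => snd z) _ _ Hf).
      apply filterdiff_linear, (is_linear_snd (U:=R_NormedModule) (V:=R_NormedModule)).
  - intros [H1 H2].
    apply (filterdiff_ext (fun y => (fst (f y), snd (f y)))).
    { intros y. destruct (f y); reflexivity. }
    apply (filterdiff_ext_lin _ (fun y : R_AbsRing => ((scal y (fst l) : R), (scal y (snd l) : R))));
      [|intros y; destruct l; reflexivity].
    apply (filterdiff_comp_2 (U:=R_NormedModule) (V:=R_NormedModule) (W:=C_R_NormedModule)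
      _ _ (fun a b => (a, b)) _ _ (fun a b => (a, b)) H1 H2).
    apply (filterdiff_ext_lin _ (fun p => p)); [|intros [a b]; reflexivity].
    apply (filterdiff_ext (fun p => p)); [intros [a b]; reflexivity | apply filterdiff_id].
Qed.

Lemma continuous_of_is_derive (f : R -> R) x l : is_derive f x l -> continuous f x.
Proof. intros H. apply (ex_derive_continuous (K:=R_AbsRing) (V:=R_NormedModule)). exists l; exact H. Qed.

Lemma continuous_Cmult (f g : R -> C) x :
  continuous_C f x -> continuous_C g x -> continuous_C (fun y => (f y * g y)%C) x.
Proof.
  rewrite !continuous_C_iff. intros [Hf1 Hf2] [Hg1 Hg2]. simpl. split;
    [apply (continuous_minus (V:=R_NormedModule)) | apply (continuous_plus (V:=R_NormedModule))];
    apply (continuous_mult (K:=R_AbsRing)); assumption.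
Qed.

Lemma continuous_Cplus (f g : R -> C) x :
  continuous_C f x -> continuous_C g x -> continuous_C (fun y => (f y + g y)%C) x.
Proof. apply (continuous_plus (V:=C_R_NormedModule)). Qed.

Lemma continuous_Cminus (f g : R -> C) x :
  continuous_C f x -> continuous_C g x -> continuous_C (fun y => (f y - g y)%C) x.
Proof. apply (continuous_minus (V:=C_R_NormedModule)). Qed.

Lemma continuous_RtoC (f : R -> R) x : continuous f x -> continuous_C (fun y => RtoC (f y)) x.
Proof. intros H. apply continuous_C_iff. split; [exact H | apply continuous_const]. Qed.

Lemma continuous_expi (f : R -> R) x : continuous f x -> continuous_C (fun y => expi (f y)) x.
Proof.
  intros H. apply continuous_C_iff; simpl. split; apply (continuous_comp f _ x H);
    [apply (continuous_of_is_derive _ _ _ (is_derive_cos _))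
    | apply (continuous_of_is_derive _ _ _ (is_derive_sin _))].
Qed.

Lemma continuous_C_comp_opp (f : R -> C) x : continuous_C f (- x) -> continuous_C (fun y => f (- y)) x.
Proof.
  apply (continuous_comp (fun y => - y) f). apply (continuous_opp (V:=R_NormedModule)), continuous_id.
Qed.

Ltac continuous_C_tac :=
  repeat match goal with
  | |- continuous (fun y => Cmult (@?f y) (@?g y)) _ => apply (continuous_Cmult f g)
  | |- continuous (fun y => Cplus (@?f y) (@?g y)) _ => apply (continuous_Cplus f g)
  | |- continuous (fun y => Cminus (@?f y) (@?g y)) _ => apply (continuous_Cminus f g)
  | |- continuous (fun y => expi (@?f y)) _ => apply (continuous_expi f)
  | |- continuous (fun y => RtoC (@?f y)) _ => apply (continuous_RtoC f)
  | |- continuous (fun _ => ?c) _ => apply continuous_const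
  end.

Lemma is_derive_Cmult (f g : R -> C) x (df dg : C) :
  is_derive_C f x df -> is_derive_C g x dg ->
  is_derive_C (fun y => (f y * g y)%C) x (df * g x + f x * dg)%C.
Proof.
  rewrite !is_derive_C_iff. intros [Hf1 Hf2] [Hg1 Hg2]. simpl.
  replace (fst df * fst (g x) - snd df * snd (g x) + (fst (f x) * fst dg - snd (f x) * snd dg))
    with ((fst df * fst (g x) + fst (f x) * fst dg) - (snd df * snd (g x) + snd (f x) * snd dg))
    by ring.
  replace (fst df * snd (g x) + snd df * fst (g x) + (fst (f x) * snd dg + snd (f x) * fst dg))
    with ((fst df * snd (g x) + fst (f x) * snd dg) + (snd df * fst (g x) + snd (f x) * fst dg))
    by ring.
  split; [apply (is_derive_minus (V:=R_NormedModule)) | apply (is_derive_plus (V:=R_NormedModule))];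
    apply Derive.is_derive_mult; assumption.
Qed.

Lemma is_derive_Cmult_const_r (f : R -> C) x (df c : C) :
  is_derive_C f x df -> is_derive_C (fun y => (f y * c)%C) x (df * c)%C.
Proof.
  intros Hf. replace (df * c)%C with (df * c + f x * 0)%C by ring.
  apply (is_derive_Cmult f (fun _ => c));
    [exact Hf | apply (is_derive_const (K:=R_AbsRing) (V:=C_R_NormedModule))].
Qed.

Lemma is_derive_RtoC (f : R -> R) x d : is_derive f x d -> is_derive_C (fun y => RtoC (f y)) x (RtoC d).
Proof.
  intros H. apply (is_derive_C_iff (fun y => RtoC (f y))); simpl.
  split; [exact H | apply (is_derive_const (K:=R_AbsRing) (V:=R_NormedModule))].
Qed.

Lemma is_derive_expi (f : R -> R) x d : is_derive f x d ->
  is_derive_C (fun y => expi (f y)) x (Ci * RtoC d * expi (f x))%C.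
Proof.
  intros H. apply (is_derive_C_iff (fun y => expi (f y))); simpl. split.
  - replace ((0 * d - 1 * 0) * cos (f x) - (0 * 0 + 1 * d) * sin (f x))
      with (d * - sin (f x)) by ring.
    exact (is_derive_comp cos f x _ d (is_derive_cos (f x)) H).
  - replace ((0 * d - 1 * 0) * sin (f x) + (0 * 0 + 1 * d) * cos (f x))
      with (d * cos (f x)) by ring.
    exact (is_derive_comp sin f x _ d (is_derive_sin (f x)) H).
Qed.

Lemma ball_C_of_Cmod (u v : C) eps : Cmod (v - u) < eps -> @ball C_R_NormedModule u eps v.
Proof.
  intros H. split; eapply Rle_lt_trans; try exact H; destruct u, v;
    [apply (Rabs_fst_le_Cmod (_, _)) | apply (Rabs_snd_le_Cmod (_, _))].
Qed.

Lemma Cmod_lt_of_ball (u v : C) eps : @ball C_R_NormedModule u eps v -> Cmod (v - u) < 2 * eps.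
Proof.
  intros [H1 H2]. change (Rabs (fst v - fst u) < eps) in H1. change (Rabs (snd v - snd u) < eps) in H2.
  eapply Rle_lt_trans; [apply Cmod_le_Rabs_fst_snd|]. destruct u, v; simpl in *; unfold Rminus in *. lra.
Qed.

Lemma continuous_C_of_lipschitz (f : R -> C) L x :
  (forall y, Cmod (f y - f x) <= L * Rabs (y - x)) -> continuous_C f x.
Proof.
  intros Hf. apply (filterlim_locally (T:=R_UniformSpace)). intros eps.
  assert (Heps := cond_pos eps). pose proof (Rabs_pos L).
  exists (mkposreal (eps / (Rabs L + 1)) ltac:(apply Rdiv_lt_0_compat; lra)).
  intros y Hy. change (Rabs (y - x) < eps / (Rabs L + 1)) in Hy.
  apply ball_C_of_Cmod. eapply Rle_lt_trans; [apply Hf|].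
  apply (Rle_lt_trans _ (Rabs L * Rabs (y - x)));
    [apply Rmult_le_compat_r; [apply Rabs_pos | apply Rle_abs]|].
  apply (Rle_lt_trans _ ((Rabs L + 1) * Rabs (y - x))); [pose proof (Rabs_pos (y - x)); nra|].
  apply (Rmult_lt_reg_r (/ (Rabs L + 1))); [apply Rinv_0_lt_compat; lra|].
  rewrite Rmult_comm, <- Rmult_assoc, Rinv_l by lra. lra.
Qed.

Lemma Cmod_RInt_le (f : R -> C) (g : R -> R) a b :
  a <= b -> ex_CRInt f a b -> ex_RInt g a b -> (forall x, a <= x <= b -> Cmod (f x) <= g x) ->
  Cmod (CRInt f a b) <= RInt g a b.
Proof.
  intros Hab Hf Hg H. rewrite Cmod_norm.
  apply (norm_RInt_le (V:=C_R_NormedModule) f g a b); auto.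
  - intros x Hx. rewrite <- Cmod_norm. auto.
  - apply (RInt_correct (V:=C_R_CompleteNormedModule)). exact Hf.
  - apply (RInt_correct (V:=R_CompleteNormedModule)). exact Hg.
Qed.

Lemma Cmod_RInt_le_const (f : R -> C) a b M :
  a <= b -> ex_CRInt f a b -> (forall x, a <= x <= b -> Cmod (f x) <= M) ->
  Cmod (CRInt f a b) <= (b - a) * M.
Proof.
  intros Hab Hf H. eapply Rle_trans; [apply (Cmod_RInt_le f (fun _ => M)); auto|].
  - apply ex_RInt_const.
  - rewrite RInt_const. right; reflexivity.
Qed.

Lemma is_derive_C_of_remainder (T : R -> C) x0 (l : C) :
  (forall eps, 0 < eps -> exists delta, 0 < delta /\ forall k, Rabs k < delta ->
     Cmod (T (x0 + k) - T x0 - RtoC k * l) <= eps * Rabs k) ->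
  is_derive_C T x0 l.
Proof.
  intros H. split; [apply is_linear_scal_l|].
  intros x Hx. apply (is_filter_lim_locally_unique (K:=R_AbsRing) (V:=R_NormedModule)) in Hx. subst x.
  intros eps. destruct (H eps (cond_pos eps)) as [d [Hd Hk]].
  exists (mkposreal d Hd). intros y Hy. change (Rabs (y - x0) < d) in Hy.
  rewrite <- Cmod_norm. change (norm (minus y x0)) with (Rabs (y - x0)).
  change (Cmod (T y - T x0 - @scal R_Ring C_R_NormedModule (Rminus y x0) l)%C <= eps * Rabs (y - x0)).
  replace (@scal R_Ring C_R_NormedModule (Rminus y x0) l) with (RtoC (Rminus y x0) * l)%C
    by (destruct l as [l1 l2]; change (@scal R_Ring C_R_NormedModule (Rminus y x0) (l1, l2))
          with (((y - x0) * l1, (y - x0) * l2) : C);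
        apply injective_projections; simpl; ring).
  replace y with (x0 + (y - x0)) at 1 by ring. apply Hk; auto.
Qed.

Lemma is_derive_RInt_param_C (Phi Psi : R -> R -> C) y0 c d L delta :
  c <= d -> 0 <= L -> 0 < delta ->
  (forall y x, continuous_C (Phi y) x) -> (forall x, continuous_C (Psi y0) x) ->
  (forall k x, Rabs k < delta -> c <= x <= d ->
     Cmod (Phi (y0 + k) x - Phi y0 x - RtoC k * Psi y0 x) <= L * k ^ 2) ->
  is_derive_C (fun y => CRInt (Phi y) c d) y0 (CRInt (Psi y0) c d).
Proof.
  intros Hcd HL Hdelta HPhi HPsi Htaylor.
  assert (Hex : forall g : R -> C, (forall x, continuous_C g x) -> ex_CRInt g c d)
    by (intros g Hg; apply (ex_RInt_continuous (V:=C_R_CompleteNormedModule)); auto).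
  apply is_derive_C_of_remainder. intros eps Heps.
  set (Q := (d - c) * L). assert (HQ : 0 <= Q) by (apply Rmult_le_pos; lra).
  exists (Rmin delta (eps / (Q + 1))). split; [apply Rmin_pos; [lra | apply Rdiv_lt_0_compat; lra]|].
  intros k Hk. pose proof (Rmin_l delta (eps / (Q + 1))). pose proof (Rmin_r delta (eps / (Q + 1))).
  assert (Hsum : (CRInt (Phi (y0 + k)%R) c d - CRInt (Phi y0) c d - RtoC k * CRInt (Psi y0) c d)%C
                 = CRInt (fun x => Phi (y0 + k)%R x - Phi y0 x - RtoC k * Psi y0 x)%C c d).
  { rewrite (RInt_ext (V:=C_R_CompleteNormedModule)
      (fun x => Phi (y0 + k)%R x - Phi y0 x - RtoC k * Psi y0 x)%C
      (fun x => @minus C_R_CompleteNormedModule (@minus C_R_CompleteNormedModule (Phi (y0 + k) x)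
         (Phi y0 x)) (@scal R_Ring C_R_CompleteNormedModule k (Psi y0 x))))
      by (intros x _; rewrite scal_R_Cmult; reflexivity).
    rewrite !(RInt_minus (V:=C_R_CompleteNormedModule)), (RInt_scal (V:=C_R_CompleteNormedModule)),
      scal_R_Cmult.
    - reflexivity.
    - apply Hex, HPsi.
    - apply Hex, HPhi.
    - apply Hex, HPhi.
    - apply (ex_RInt_minus (V:=C_R_CompleteNormedModule)); apply Hex, HPhi.
    - apply (ex_RInt_scal (V:=C_R_CompleteNormedModule)), Hex, HPsi. }
  rewrite Hsum. eapply Rle_trans; [apply Cmod_RInt_le_const; [exact Hcd | |]|].
  - apply Hex. intros x. continuous_C_tac; auto.
  - intros x Hx. apply Htaylor; [lra | exact Hx].
  - pose proof (Rabs_pos k).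
    replace (k ^ 2) with (Rabs k * Rabs k) by (rewrite <- Rabs_mult, Rabs_pos_eq; nra).
    replace ((d - c) * (L * (Rabs k * Rabs k))) with (Q * Rabs k * Rabs k) by (unfold Q; ring).
    apply Rmult_le_compat_r; [lra|].
    apply (Rle_trans _ (Q * (eps / (Q + 1)))); [apply Rmult_le_compat_l; lra|].
    apply (Rmult_le_reg_r (Q + 1)); [lra|]. unfold Rdiv.
    rewrite Rmult_assoc, (Rmult_assoc eps), Rinv_l by lra. nra.
Qed.

Lemma RInt_symmetric_C (g : R -> C) N : (forall x, continuous_C g x) ->
  CRInt g (- N) N = CRInt (fun x => g x + g (- x)%R)%C 0 N.
Proof.
  intros Hg.
  assert (Hex : forall h : R -> C, (forall x, continuous_C h x) -> forall a b, ex_CRInt h a b)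
    by (intros h Hh a b; apply (ex_RInt_continuous (V:=C_R_CompleteNormedModule)); auto).
  assert (Hgo : forall x, continuous_C (fun y => g (- y)) x)
    by (intros; apply continuous_C_comp_opp, Hg).
  assert (Hrefl : CRInt (fun x => g (- x)) 0 N = CRInt g (- N) 0).
  { pose proof (is_RInt_comp_opp (V:=C_R_NormedModule) _ _ _ _
      (RInt_correct (V:=C_R_CompleteNormedModule) _ _ _ (Hex g Hg (- 0) (- N)))) as Hopp.
    apply (is_RInt_unique (V:=C_R_CompleteNormedModule)) in Hopp. rewrite Ropp_0 in Hopp.
    rewrite <- (opp_RInt_swap (V:=C_R_CompleteNormedModule) g 0 (- N)), <- Hopp by auto.
    rewrite (RInt_opp (V:=C_R_CompleteNormedModule)) by auto.
    change (CRInt (fun x => g (- x)%R) 0 N = - - CRInt (fun y => g (- y)%R) 0 N)%C. ring_C. }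
  rewrite <- (RInt_Chasles (V:=C_R_CompleteNormedModule) g (- N) 0 N) by auto.
  rewrite <- Hrefl, (RInt_plus (V:=C_R_CompleteNormedModule)) by auto.
  change (plus ?x ?y) with (x + y)%C. ring_C.
Qed.

Lemma Rabs_sin_le s : Rabs (sin s) <= Rabs s.
Proof.
  replace (sin s) with (sin s - sin 0) by (rewrite sin_0; ring).
  replace (Rabs s) with (1 * Rabs (s - 0)) by (rewrite Rminus_0_r; ring).
  apply (bounded_variation sin cos). intros t _. split; [apply is_derive_sin|].
  pose proof (COS_bound t). apply Rabs_le; lra.
Qed.

Lemma Rabs_cos_sub_1_le s : Rabs (cos s - 1) <= s ^ 2.
Proof.
  replace (cos s - 1) with (cos s - cos 0) by (rewrite cos_0; ring).
  replace (s ^ 2) with (Rabs s * Rabs (s - 0)) by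
    (rewrite Rminus_0_r, <- Rabs_mult, Rabs_pos_eq; nra).
  apply (bounded_variation cos (fun t => - sin t)). intros t Ht. split; [apply is_derive_cos|].
  rewrite Rabs_Ropp. eapply Rle_trans; [apply Rabs_sin_le|]. rewrite !Rminus_0_r in Ht. exact Ht.
Qed.

Lemma Cmod_expi_sub_taylor_le s : Rabs s <= 1 -> Cmod (expi s - 1 - Ci * RtoC s) <= 2 * s ^ 2.
Proof.
  intros Hs. eapply Rle_trans; [apply Cmod_le_Rabs_fst_snd|]. simpl.
  replace (cos s + - (1) + - (0 * s - 1 * 0)) with (cos s - 1) by ring.
  replace (sin s + - 0 + - (0 * 0 + 1 * s)) with (sin s - s) by ring.
  assert (Htaylor : Rabs ((sin s - s) - (sin 0 - 0)) <= s ^ 2 * Rabs (s - 0)).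
  { apply (bounded_variation (fun t => sin t - t) (fun t => cos t - 1)). intros t Ht. split.
    - auto_derive; auto; ring.
    - eapply Rle_trans; [apply Rabs_cos_sub_1_le|]. rewrite !Rminus_0_r in Ht.
      rewrite <- (pow2_abs t), <- (pow2_abs s).
      apply pow_incr. split; [apply Rabs_pos | exact Ht]. }
  pose proof (Rabs_cos_sub_1_le s). rewrite sin_0, !Rminus_0_r in Htaylor.
  assert (s ^ 2 * Rabs s <= s ^ 2) by (assert (0 <= s ^ 2) by nra; nra).
  replace (s * (s * 1)) with (s ^ 2) by ring. lra.
Qed.

Lemma Cmod_sub_le_of_filterlim {T} {F : (T -> Prop) -> Prop} {FF : ProperFilter F}
  (S : T -> C) (l m : C) c :
  filterlim S F (@locally C_R_NormedModule l) -> F (fun N => Cmod (S N - m) <= c) ->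
  Cmod (l - m) <= c.
Proof.
  intros Hl Hc. apply le_epsilon. intros eps Heps.
  assert (Hball := proj1 (filterlim_locally S l) Hl (mkposreal (eps / 2) ltac:(lra))).
  destruct (filter_ex _ (filter_and _ _ Hball Hc)) as [N [HN HcN]].
  apply Cmod_lt_of_ball in HN. simpl in HN.
  replace (l - m)%C with ((S N - m) - (S N - l))%C by ring.
  eapply Rle_trans; [apply Cmod_sub_le|]. lra.
Qed.

Lemma is_derive_uniform_limit (s s' : nat -> R -> R) (g g' : R -> R) x0 (r : posreal) :
  (forall n y, Boule x0 r y -> is_derive (s n) y (s' n y)) ->
  (forall eps, 0 < eps -> exists N, forall n y, (N <= n)%nat -> Boule x0 r y ->
     Rabs (g y - s n y) < eps /\ Rabs (g' y - s' n y) < eps) ->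
  is_derive g x0 (g' x0).
Proof.
  intros Hd Hu. apply is_derive_Reals.
  apply (CVU_derivable s s' g g' x0 r).
  - intros eps Heps. destruct (Hu eps Heps) as [N HN]. exists N. intros n y Hn Hy. apply HN; auto.
  - intros y Hy eps Heps. destruct (Hu eps Heps) as [N HN]. exists N. intros n Hn.
    unfold Rdist. rewrite Rabs_minus_sym. apply HN; auto.
  - intros n y Hy. apply is_derive_Reals, Hd, Hy.
  - unfold Boule. rewrite Rminus_eq_0, Rabs_R0. apply cond_pos.
Qed.

Lemma is_derive_C_uniform_limit (s s' : nat -> R -> C) (g g' : R -> C) x0 (r : posreal) :
  (forall n y, Boule x0 r y -> is_derive_C (s n) y (s' n y)) ->
  (forall eps, 0 < eps -> exists N, forall n y, (N <= n)%nat -> Boule x0 r y ->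
     Cmod (g y - s n y) < eps /\ Cmod (g' y - s' n y) < eps) ->
  is_derive_C g x0 (g' x0).
Proof.
  intros Hd Hu. apply is_derive_C_iff. split;
    [apply (is_derive_uniform_limit (fun n y => fst (s n y)) (fun n y => fst (s' n y))
              (fun y => fst (g y)) (fun y => fst (g' y)) x0 r)
    |apply (is_derive_uniform_limit (fun n y => snd (s n y)) (fun n y => snd (s' n y))
              (fun y => snd (g y)) (fun y => snd (g' y)) x0 r)];
    try (intros n y Hy; apply is_derive_C_iff, Hd, Hy);
    intros eps Heps; destruct (Hu eps Heps) as [N HN]; exists N; intros n y Hn Hy;
    destruct (HN n y Hn Hy) as [H1 H2]; split;
    [ exact (Rle_lt_trans _ _ _ (Rabs_fst_le_Cmod (g y - s n y)) H1)
    | exact (Rle_lt_trans _ _ _ (Rabs_fst_le_Cmod (g' y - s' n y)) H2)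
    | exact (Rle_lt_trans _ _ _ (Rabs_snd_le_Cmod (g y - s n y)) H1)
    | exact (Rle_lt_trans _ _ _ (Rabs_snd_le_Cmod (g' y - s' n y)) H2) ].
Qed.

Lemma Cmod_sub_le_of_increments (F : R -> C) (G : R -> R) a b L :
  a <= b -> 0 <= L ->
  (forall s s', a <= s -> s <= s' -> s' <= b ->
     Cmod (F s' - F s) <= G s' - G s + L * (s' - s) ^ 2) ->
  Cmod (F b - F a) <= G b - G a.
Proof.
  intros Hab HL Hstep.
  assert (Hsub : forall n : nat, (0 < n)%nat ->
            Cmod (F b - F a) <= G b - G a + L * (b - a) ^ 2 / INR n).
  { intros n Hn. assert (HnR : 0 < INR n) by (apply lt_0_INR; lia).
    set (d := (b - a) / INR n). assert (Hd : 0 <= d) by (apply Rdiv_le_0_compat; lra).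
    assert (Hind : forall k : nat, (k <= n)%nat ->
              Cmod (F (a + INR k * d) - F a) <= G (a + INR k * d) - G a + INR k * (L * d ^ 2)).
    { induction k as [|k IH]; intros Hk.
      - rewrite INR_0, !Rmult_0_l, Rplus_0_r.
        replace (F a - F a)%C with (RtoC 0) by ring. rewrite Cmod_0. lra.
      - assert (Hkn : INR k + 1 <= INR n) by (rewrite <- S_INR; apply le_INR; lia).
        assert (Hnd : INR n * d = b - a) by (unfold d; field; lra).
        pose proof (pos_INR k).
        specialize (IH ltac:(lia)). rewrite S_INR.
        set (s := a + INR k * d) in *.
        replace (a + (INR k + 1) * d) with (s + d) by (unfold s; ring).
        replace (F (s + d)%R - F a)%C with ((F (s + d)%R - F s) + (F s - F a))%C by ring.
        eapply Rle_trans; [apply Cmod_triangle|].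
        assert (Hs := Hstep s (s + d) ltac:(unfold s; nra) ltac:(lra) ltac:(unfold s; nra)).
        replace (s + d - s) with d in Hs by ring. lra. }
    specialize (Hind n (Nat.le_refl n)).
    replace (a + INR n * d) with b in Hind by (unfold d; field; lra).
    replace (L * (b - a) ^ 2 / INR n) with (INR n * (L * d ^ 2)) by (unfold d; field; lra).
    exact Hind. }
  apply le_epsilon. intros eps Heps.
  assert (HM : 0 <= L * (b - a) ^ 2) by (apply Rmult_le_pos; [lra | apply pow_le; lra]).
  destruct (archimed_cor1 (eps / (L * (b - a) ^ 2 + 1))) as [n [Hn Hn0]];
    [apply Rdiv_lt_0_compat; lra|].
  eapply Rle_trans; [apply (Hsub n Hn0)|]. apply Rplus_le_compat_l.
  assert (HnR : 0 < INR n) by (apply lt_0_INR; lia).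
  assert (Hinv : 0 < / INR n) by (apply Rinv_0_lt_compat; lra).
  unfold Rdiv. apply (Rle_trans _ ((L * (b - a) ^ 2 + 1) * / INR n)); [nra|].
  apply (Rmult_le_reg_l (/ (L * (b - a) ^ 2 + 1))); [apply Rinv_0_lt_compat; lra|].
  rewrite <- Rmult_assoc, Rinv_l, Rmult_1_l, Rmult_comm by lra. exact (Rlt_le _ _ Hn).
Qed.

Section WeightedVariation.

Variable rho : R -> R.
Hypothesis rho_continuous : forall x, continuous rho x.
Hypothesis rho_between_0_1 : forall x, 0 <= rho x <= 1.

Lemma ex_RInt_weight c d : ex_RInt rho c d.
Proof. apply (ex_RInt_continuous (V:=R_CompleteNormedModule)). intros; apply rho_continuous. Qed.

Lemma RInt_weight_le c d : c <= d -> RInt rho c d <= d - c.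
Proof.
  intros Hcd. replace (d - c) with (RInt (fun _ => 1) c d)
    by (rewrite RInt_const; unfold scal; simpl; unfold mult; simpl; ring).
  apply RInt_le; auto using ex_RInt_weight, ex_RInt_const. intros x _. apply rho_between_0_1.
Qed.

Lemma lipschitz_of_weighted_variation (u : R -> C) B : 0 <= B ->
  (forall c d, c <= d -> Cmod (u d - u c) <= B * RInt rho c d) ->
  forall c d, Cmod (u d - u c) <= B * Rabs (d - c).
Proof.
  intros HB Hu.
  assert (Hle : forall c d, c <= d -> Cmod (u d - u c) <= B * (d - c)).
  { intros c d Hcd. eapply Rle_trans; [apply Hu, Hcd|].
    apply Rmult_le_compat_l; [exact HB | apply RInt_weight_le, Hcd]. }
  intros c d. destruct (Rle_or_lt c d).
  - rewrite Rabs_pos_eq by lra. auto.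
  - rewrite Rabs_left, Cmod_sub_sym by lra. replace (- (d - c)) with (c - d) by ring. apply Hle; lra.
Qed.

End WeightedVariation.

Section RoughIntegrationByParts.

Variables (h h' u : R -> C) (H rho : R -> R) (a b B D : R).
Hypothesis Hab : a <= b.
Hypothesis HB : 0 <= B.
Hypothesis h_derive : forall x, a <= x <= b -> is_derive_C h x (h' x).
Hypothesis h'_continuous : forall x, a <= x <= b -> continuous_C h' x.
Hypothesis h'_bound : forall x, a <= x <= b -> Cmod (h' x) <= D.
Hypothesis h_bound : forall x, a <= x <= b -> Cmod (h x) <= H x.
Hypothesis H_continuous : forall x, a <= x <= b -> continuous H x.
Hypothesis H_nonincreasing : forall x y, a <= x -> x <= y -> y <= b -> H y <= H x.
Hypothesis rho_continuous : forall x, continuous rho x.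
Hypothesis rho_between_0_1 : forall x, 0 <= rho x <= 1.
Hypothesis u_variation : forall c d, c <= d -> Cmod (u d - u c) <= B * RInt rho c d.

Let u_continuous x : continuous_C u x.
Proof.
  apply (continuous_C_of_lipschitz u B). intros y.
  exact (lipschitz_of_weighted_variation rho rho_continuous rho_between_0_1 u B HB u_variation x y).
Qed.

Let ex_RInt_between (g : R -> C) c d : (forall x, a <= x <= b -> continuous_C g x) ->
  a <= c -> c <= d -> d <= b -> ex_CRInt g c d.
Proof.
  intros Hg Hac Hcd Hdb. apply (ex_RInt_continuous (V:=C_R_CompleteNormedModule)). intros z Hz.
  rewrite Rmin_left, Rmax_right in Hz by lra. apply Hg. lra.
Qed.

Let ex_RInt_Hrho c d : a <= c -> c <= d -> d <= b -> ex_RInt (fun x => H x * rho x) c d.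
Proof.
  intros. apply (ex_RInt_continuous (V:=R_CompleteNormedModule)). intros z Hz.
  rewrite Rmin_left, Rmax_right in Hz by lra.
  apply (continuous_mult (K:=R_AbsRing)); [apply H_continuous; lra | apply rho_continuous].
Qed.

Let by_parts_remainder s := (CRInt (fun x => h' x * u x) a s - h s * u s)%C.

(* [h'] integrates exactly against [u] frozen at [s]. *)
Let by_parts_remainder_increment s s' : a <= s -> s <= s' -> s' <= b ->
  (by_parts_remainder s' - by_parts_remainder s)%C =
  (CRInt (fun x => h' x * (u x - u s)) s s' - h s' * (u s' - u s))%C.
Proof.
  intros Has Hss' Hs'b. unfold by_parts_remainder.
  rewrite <- (RInt_Chasles (V:=C_R_CompleteNormedModule) _ a s s')
    by (apply ex_RInt_between; try lra; intros x Hx; continuous_C_tac; auto).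
  assert (Hftc : CRInt (fun x => h' x * u s)%C s s' = (h s' * u s - h s * u s)%C).
  { apply is_RInt_unique, (is_RInt_derive (V:=C_R_CompleteNormedModule) (fun x => h x * u s)%C);
      intros x Hx; rewrite Rmin_left, Rmax_right in Hx by lra.
    - apply is_derive_Cmult_const_r, h_derive; lra.
    - apply continuous_Cmult; [apply h'_continuous; lra | apply continuous_const]. }
  rewrite (RInt_ext (V:=C_R_CompleteNormedModule) (fun x => h' x * u x)%C
    (fun x => @plus C_R_CompleteNormedModule (h' x * (u x - u s)) (h' x * u s))%C s s')
    by (intros x _; change (h' x * u x = h' x * (u x - u s) + h' x * u s)%C; ring).
  rewrite (RInt_plus (V:=C_R_CompleteNormedModule)), Hftc.
  - repeat change (plus ?x ?y) with (x + y)%C. ring_C.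
  - apply ex_RInt_between; try lra. intros x Hx. continuous_C_tac; auto.
  - apply ex_RInt_between; try lra. intros x Hx. continuous_C_tac; auto.
Qed.

Let Cmod_RInt_frozen_le s s' : a <= s -> s <= s' -> s' <= b ->
  Cmod (CRInt (fun x => h' x * (u x - u s))%C s s') <= D * B * (s' - s) ^ 2.
Proof.
  intros Has Hss' Hs'b.
  replace (D * B * (s' - s) ^ 2) with ((s' - s) * (D * (B * (s' - s)))) by ring.
  apply Cmod_RInt_le_const; [lra | apply ex_RInt_between; try lra; intros; continuous_C_tac; auto|].
  intros x Hx. rewrite Cmod_mult. apply Rmult_le_compat; try apply Cmod_ge_0; [apply h'_bound; lra|].
  eapply Rle_trans;
    [exact (lipschitz_of_weighted_variation rho rho_continuous rho_between_0_1 u B HB u_variation s x)|].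
  apply Rmult_le_compat_l; [exact HB|]. rewrite Rabs_pos_eq; lra.
Qed.

Let Cmod_boundary_increment_le s s' : a <= s -> s <= s' -> s' <= b ->
  Cmod (h s' * (u s' - u s))%C <= B * RInt (fun x => H x * rho x) s s'.
Proof.
  intros Has Hss' Hs'b. rewrite Cmod_mult. eapply Rle_trans.
  { apply Rmult_le_compat; try apply Cmod_ge_0; [apply h_bound; lra | apply u_variation; lra]. }
  rewrite Rmult_comm, Rmult_assoc. apply Rmult_le_compat_l; [exact HB|].
  rewrite Rmult_comm, <- (RInt_scal (V:=R_CompleteNormedModule)) by (apply (ex_RInt_weight rho); auto).
  apply RInt_le; [lra | | apply ex_RInt_Hrho; lra |].
  - apply (ex_RInt_scal (V:=R_CompleteNormedModule)), (ex_RInt_weight rho); auto.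
  - intros x Hx. unfold scal; simpl; unfold mult; simpl.
    apply Rmult_le_compat_r; [apply rho_between_0_1 | apply H_nonincreasing; lra].
Qed.

Lemma Cmod_RInt_by_parts_le :
  Cmod (CRInt (fun x => h' x * u x) a b - (h b * u b - h a * u a))%C
  <= B * RInt (fun x => H x * rho x) a b.
Proof.
  assert (HD : 0 <= D) by (eapply Rle_trans; [apply Cmod_ge_0 | apply (h'_bound a); lra]).
  replace (CRInt (fun x => h' x * u x) a b - (h b * u b - h a * u a))%C
    with (by_parts_remainder b - by_parts_remainder a)%C.
  2: { unfold by_parts_remainder. rewrite (RInt_point (V:=C_R_CompleteNormedModule)).
       change (@zero C_R_CompleteNormedModule) with (RtoC 0). ring_C. }
  replace (B * RInt (fun x => H x * rho x) a b)
    with (B * RInt (fun x => H x * rho x) a b - B * RInt (fun x => H x * rho x) a a)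
    by (rewrite (RInt_point (V:=R_CompleteNormedModule));
        change (@zero R_CompleteNormedModule) with 0; ring).
  apply (Cmod_sub_le_of_increments _ (fun s => B * RInt (fun x => H x * rho x) a s) a b (D * B));
    [lra | apply Rmult_le_pos; auto |].
  intros s s' Has Hss' Hs'b. rewrite by_parts_remainder_increment by auto.
  eapply Rle_trans; [apply Cmod_sub_le|].
  rewrite <- (RInt_Chasles (V:=R_CompleteNormedModule) _ a s s') by (apply ex_RInt_Hrho; lra).
  change (plus ?x ?y) with (x + y).
  pose proof (Cmod_RInt_frozen_le s s' Has Hss' Hs'b).
  pose proof (Cmod_boundary_increment_le s s' Has Hss' Hs'b). lra.
Qed.

End RoughIntegrationByParts.

Lemma jbr_negpow_pos mu x : 0 < jbr_negpow mu x.
Proof. apply exp_pos. Qed.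

Lemma jbr_negpow_continuous mu x : continuous (jbr_negpow mu) x.
Proof.
  apply (continuous_of_is_derive _ _
    (exp (- mu / 2 * ln (1 + x ^ 2)) * (- mu / 2 * (2 * x / (1 + x ^ 2))))).
  unfold jbr_negpow, Rpower. auto_derive; [nra|].
  replace (x * (x * 1)) with (x ^ 2) by ring. field. nra.
Qed.

Lemma jbr_negpow_le_1 mu x : 0 <= mu -> jbr_negpow mu x <= 1.
Proof.
  intros Hmu. unfold jbr_negpow, Rpower. apply Rle_trans with (exp 0); [|rewrite exp_0; lra].
  assert (0 <= ln (1 + x ^ 2)) by (rewrite <- ln_1; apply ln_le; nra).
  apply exp_le. nra.
Qed.

Lemma jbr_negpow_le_Rpower mu x : 0 <= mu -> 1 <= x -> jbr_negpow mu x <= Rpower x (- mu).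
Proof.
  intros Hmu Hx. unfold jbr_negpow, Rpower.
  assert (Hln : 2 * ln x <= ln (1 + x ^ 2)).
  { replace (2 * ln x) with (ln (x ^ 2)) by (simpl; rewrite Rmult_1_r, ln_mult by lra; ring).
    apply ln_le; nra. }
  apply exp_le. nra.
Qed.

Lemma jbr_negpow_opp mu x : jbr_negpow mu (- x) = jbr_negpow mu x.
Proof. unfold jbr_negpow. f_equal. ring. Qed.

Lemma RInt_jbr_negpow_opp mu c d : RInt (jbr_negpow mu) (- d) (- c) = RInt (jbr_negpow mu) c d.
Proof.
  assert (Hex : forall c d, ex_RInt (jbr_negpow mu) c d).
  { intros. apply (ex_RInt_continuous (V:=R_CompleteNormedModule)).
    intros; apply jbr_negpow_continuous. }
  pose proof (is_RInt_comp_opp (V:=R_NormedModule) _ _ _ _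
    (RInt_correct (V:=R_CompleteNormedModule) _ _ _ (Hex (- d) (- c)))) as Hopp.
  rewrite <- (is_RInt_unique _ _ _ _ Hopp).
  rewrite (RInt_ext _ (fun y => opp (jbr_negpow mu y))) by (intros; rewrite jbr_negpow_opp; reflexivity).
  rewrite (RInt_opp (V:=R_CompleteNormedModule)) by apply Hex.
  apply (opp_RInt_swap (V:=R_CompleteNormedModule)), Hex.
Qed.

Section W1inf0muBound.

Variables (mu A B : R) (w : R -> C).
Hypothesis Hmu : 0 <= mu.
Hypothesis Hw : W1inf0mu_bound mu w A B.

Lemma W1inf0mu_bound_nonneg : 0 <= A /\ 0 <= B.
Proof.
  destruct Hw as [HA HB]. split; [eapply Rle_trans; [apply Cmod_ge_0 | apply (HA 0)]|].
  assert (Hpos : 0 < RInt (jbr_negpow mu) 0 1).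
  { apply RInt_gt_0; [lra | intros; apply jbr_negpow_pos | intros; apply jbr_negpow_continuous]. }
  pose proof (Cmod_ge_0 (w 1 - w 0)%C). pose proof (HB 0 1 ltac:(lra)).
  destruct (Rle_or_lt 0 B); [assumption | nra].
Qed.

Lemma W1inf0mu_bound_lipschitz c d : Cmod (w d - w c) <= B * Rabs (d - c).
Proof.
  apply (lipschitz_of_weighted_variation (jbr_negpow mu)); try apply Hw.
  - apply jbr_negpow_continuous.
  - intros x. split; [left; apply jbr_negpow_pos | apply jbr_negpow_le_1, Hmu].
  - apply W1inf0mu_bound_nonneg.
Qed.

Lemma W1inf0mu_bound_continuous x : continuous_C w x.
Proof. apply (continuous_C_of_lipschitz w B). intros y. apply W1inf0mu_bound_lipschitz. Qed.

Lemma W1inf0mu_bound_scale (c : C) : Cmod c <= 1 -> W1inf0mu_bound mu (fun x => c * w x)%C A B.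
Proof.
  intros Hc. destruct Hw as [HA HB].
  assert (Hle : forall z, Cmod (c * z) <= Cmod z).
  { intros z. rewrite Cmod_mult. pose proof (Cmod_ge_0 z). pose proof (Cmod_ge_0 c). nra. }
  split.
  - intros x. eapply Rle_trans; [apply Hle | apply HA].
  - intros a b Hab. replace (c * w b - c * w a)%C with (c * (w b - w a))%C by ring.
    eapply Rle_trans; [apply Hle | apply HB, Hab].
Qed.

Lemma W1inf0mu_bound_reflect : W1inf0mu_bound mu (fun x => w (- x)) A B.
Proof.
  destruct Hw as [HA HB]. split; [intros; apply HA|].
  intros c d Hcd. rewrite Cmod_sub_sym, <- RInt_jbr_negpow_opp. apply HB. lra.
Qed.

End W1inf0muBound.

Lemma RInt_antiderivative (F f : R -> R) a b : a <= b ->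
  (forall x, a <= x <= b -> is_derive F x (f x)) -> (forall x, a <= x <= b -> continuous f x) ->
  RInt f a b = F b - F a.
Proof.
  intros Hab HF Hf. apply (is_RInt_unique (V:=R_CompleteNormedModule)).
  apply (is_RInt_derive (V:=R_CompleteNormedModule)); intros x Hx;
    rewrite Rmin_left, Rmax_right in Hx by lra; auto.
Qed.

Lemma RInt_inv_sqr_le a b : 0 < a <= b -> RInt (fun x => / x ^ 2) a b <= / a.
Proof.
  intros Hab. rewrite (RInt_antiderivative (fun x => - / x)); [| lra | |].
  - assert (0 < / b) by (apply Rinv_0_lt_compat; lra). lra.
  - intros x Hx. auto_derive; [lra | field; lra].
  - intros x Hx. apply (continuous_of_is_derive _ _ (- 2 * x / x ^ 4)). auto_derive; [nra | field; lra].
Qed.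

Lemma RInt_jbr_negpow_div_le mu a b : 0 < mu -> 1 <= a <= b ->
  RInt (fun x => jbr_negpow mu x / x) a b <= Rpower a (- mu) / mu.
Proof.
  intros Hmu Hab.
  apply (Rle_trans _ (RInt (fun x => Rpower x (- mu) / x) a b)).
  - apply RInt_le; [lra | | |].
    + apply (ex_RInt_continuous (V:=R_CompleteNormedModule)). intros z Hz.
      rewrite Rmin_left, Rmax_right in Hz by lra.
      apply (continuous_mult (K:=R_AbsRing)); [apply jbr_negpow_continuous|].
      apply (continuous_of_is_derive _ _ (- / z ^ 2)). auto_derive; [lra | field; lra].
    + apply (ex_RInt_continuous (V:=R_CompleteNormedModule)). intros z Hz.
      rewrite Rmin_left, Rmax_right in Hz by lra.
      eapply continuous_of_is_derive. unfold Rpower. auto_derive; [lra|reflexivity].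
    + intros x Hx. unfold Rdiv. apply Rmult_le_compat_r; [left; apply Rinv_0_lt_compat; lra|].
      apply jbr_negpow_le_Rpower; lra.
  - rewrite (RInt_antiderivative (fun x => - Rpower x (- mu) / mu)); [| lra | |].
    + assert (0 < Rpower b (- mu) / mu) by (apply Rdiv_lt_0_compat; [apply exp_pos | lra]). lra.
    + intros x Hx. unfold Rpower. auto_derive; [lra | field; lra].
    + intros x Hx. eapply continuous_of_is_derive. unfold Rpower. auto_derive; [lra | reflexivity].
Qed.

Definition decay (mu a : R) : R := / a + Rpower a (- mu).

Lemma decay_nonneg mu a : 0 < a -> 0 <= decay mu a.
Proof.
  intros Ha. unfold decay. pose proof (exp_pos (- mu * ln a)).
  assert (0 < / a) by (apply Rinv_0_lt_compat; lra). unfold Rpower. lra.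
Qed.

Lemma decay_le_2 mu a : 0 <= mu -> 1 <= a -> decay mu a <= 2.
Proof.
  intros Hmu Ha. unfold decay, Rpower.
  assert (/ a <= 1) by (rewrite <- Rinv_1; apply Rinv_le_contravar; lra).
  assert (0 <= ln a) by (rewrite <- ln_1; apply ln_le; lra).
  assert (exp (- mu * ln a) <= exp 0) by (apply exp_le; nra).
  rewrite exp_0 in *. lra.
Qed.

Lemma decay_eventually_le mu eps : 0 < mu -> 0 < eps ->
  exists a1, 1 <= a1 /\ forall a, a1 <= a -> decay mu a <= eps.
Proof.
  intros Hmu Heps. set (a1 := Rmax 1 (Rmax (2 / eps) (exp (- ln (eps / 2) / mu)))).
  exists a1. split; [apply Rmax_l|]. intros a Ha. unfold decay, Rpower.
  assert (H1 : 1 <= a) by (eapply Rle_trans; [apply Rmax_l | exact Ha]).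
  assert (H2 : 2 / eps <= a)
    by (eapply Rle_trans; [eapply Rle_trans; [apply Rmax_l | apply Rmax_r] | exact Ha]).
  assert (H3 : exp (- ln (eps / 2) / mu) <= a)
    by (eapply Rle_trans; [eapply Rle_trans; [apply Rmax_r | apply Rmax_r] | exact Ha]).
  assert (Hinv : / a <= eps / 2).
  { replace (eps / 2) with (/ (2 / eps)) by (field; lra).
    apply Rinv_le_contravar; [apply Rdiv_lt_0_compat|]; lra. }
  assert (Hpow : exp (- mu * ln a) <= eps / 2).
  { assert (Hln : - ln (eps / 2) / mu <= ln a)
      by (rewrite <- (ln_exp (- ln (eps / 2) / mu)); apply ln_le; [apply exp_pos | exact H3]).
    rewrite <- (exp_ln (eps / 2)) by lra. apply exp_le.
    apply (Rmult_le_compat_l mu) in Hln; [|lra].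
    replace (mu * (- ln (eps / 2) / mu)) with (- ln (eps / 2)) in Hln by (field; lra). lra. }
  lra.
Qed.

Section NonStationaryPhase.

Variables (mu lam Lam a0 A B : R) (phi phi' phi'' p p' : R -> R) (u : R -> C).
Hypothesis Hmu : 0 < mu.
Hypothesis Hlam : 0 < lam.
Hypothesis Ha0 : 1 <= a0.
Hypothesis phi_derive : forall x, is_derive phi x (phi' x).
Hypothesis phi'_derive : forall x, is_derive phi' x (phi'' x).
Hypothesis phi''_continuous : forall x, continuous phi'' x.
Hypothesis phi'_lower : forall x, a0 <= x -> lam * x ^ 2 <= Rabs (phi' x).
Hypothesis phi''_upper : forall x, a0 <= x -> Rabs (phi'' x) <= Lam * x.
Hypothesis p_derive : forall x, is_derive p x (p' x).
Hypothesis p'_continuous : forall x, continuous p' x.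
Hypothesis p_bound : forall x, a0 <= x -> Rabs (p x) <= x.
Hypothesis p'_bound : forall x, a0 <= x -> Rabs (p' x) <= 1.
Hypothesis Hu : W1inf0mu_bound mu u A B.

Let c2 := / lam + Lam / lam ^ 2.

(* [p e^{i phi} = h' + i r' e^{i phi}] with [h = -i r e^{i phi}], [r = p / phi']. *)
Let c2_nonneg : 0 <= c2.
Proof.
  assert (HLam : 0 <= Lam * a0) by
    (eapply Rle_trans; [apply Rabs_pos | apply phi''_upper; lra]).
  assert (0 <= Lam) by nra.
  unfold c2. apply Rplus_le_le_0_compat; [left; apply Rinv_0_lt_compat, Hlam|].
  apply Rdiv_le_0_compat; [lra | apply pow_lt, Hlam].
Qed.

Let r x := p x / phi' x.
Let r' x := (p' x * phi' x - p x * phi'' x) / phi' x ^ 2.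
Let h x := (- Ci * RtoC (r x) * expi (phi x))%C.
Let h' x := (RtoC (p x) * expi (phi x) - Ci * RtoC (r' x) * expi (phi x))%C.

Definition nonstationary_const := 2 / lam + (/ lam + Lam / lam ^ 2) + / (lam * mu).

Let phi'_pos x : a0 <= x -> 0 < Rabs (phi' x).
Proof.
  intros Hx. eapply Rlt_le_trans; [|apply phi'_lower, Hx]. apply Rmult_lt_0_compat; [lra | nra].
Qed.

Let phi'_neq_0 x : a0 <= x -> phi' x <> 0.
Proof. intros Hx E. pose proof (phi'_pos x Hx). rewrite E, Rabs_R0 in *. lra. Qed.

Let r_bound x : a0 <= x -> Rabs (r x) <= / (lam * x).
Proof.
  intros Hx. unfold r. rewrite Rabs_div by auto.
  apply (Rle_trans _ (x / (lam * x ^ 2))).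
  - unfold Rdiv. apply Rmult_le_compat; [apply Rabs_pos | left; apply Rinv_0_lt_compat, phi'_pos, Hx
      | apply p_bound, Hx | apply Rinv_le_contravar; [apply Rmult_lt_0_compat; nra | auto]].
  - right. field. lra.
Qed.

Let r'_bound x : a0 <= x -> Rabs (r' x) <= c2 / x ^ 2.
Proof.
  intros Hx. pose proof (phi'_lower x Hx). pose proof (phi'_pos x Hx).
  assert (Hx2 : 0 < lam * x ^ 2) by (apply Rmult_lt_0_compat; [lra | apply pow_lt; lra]).
  assert (Hsplit : r' x = p' x / phi' x - p x * phi'' x / phi' x ^ 2)
    by (unfold r'; field; auto).
  rewrite Hsplit. unfold Rminus. eapply Rle_trans; [apply Rabs_triang|]. rewrite Rabs_Ropp.
  rewrite !Rabs_div, Rabs_mult, <- RPow_abs by (try apply pow_nonzero; auto).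
  assert (Hp := p_bound x Hx). assert (Hp' := p'_bound x Hx). assert (Hpp := phi''_upper x Hx).
  assert (Hsq : (lam * x ^ 2) ^ 2 <= Rabs (phi' x) ^ 2) by (apply pow_incr; split; [nra | auto]).
  assert (H1 : Rabs (p' x) / Rabs (phi' x) <= 1 / (lam * x ^ 2)).
  { unfold Rdiv. apply Rmult_le_compat; [apply Rabs_pos | left; apply Rinv_0_lt_compat; auto | auto
      | apply Rinv_le_contravar; auto]. }
  assert (H2 : Rabs (p x) * Rabs (phi'' x) / Rabs (phi' x) ^ 2 <= x * (Lam * x) / (lam * x ^ 2) ^ 2).
  { unfold Rdiv. apply Rmult_le_compat.
    - apply Rmult_le_pos; apply Rabs_pos.
    - left. apply Rinv_0_lt_compat, pow_lt. auto.
    - apply Rmult_le_compat; auto; apply Rabs_pos.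
    - apply Rinv_le_contravar; [apply pow_lt; auto | auto]. }
  eapply Rle_trans; [apply Rplus_le_compat; [exact H1 | exact H2]|].
  right. unfold c2. field. lra.
Qed.

Let r_derive x : a0 <= x -> is_derive r x (r' x).
Proof. intros Hx. apply (is_derive_div p phi' x (p' x) (phi'' x)); auto. Qed.

Let r'_continuous x : a0 <= x -> continuous r' x.
Proof.
  intros Hx. apply (continuous_ext (fun y => (p' y * phi' y - p y * phi'' y) * / phi' y ^ 2));
    [reflexivity|].
  apply (continuous_mult (K:=R_AbsRing)).
  - apply (continuous_minus (V:=R_NormedModule)); apply (continuous_mult (K:=R_AbsRing));
      eauto using continuous_of_is_derive.
  - apply (continuous_of_is_derive _ _ (- (INR 2 * phi'' x * phi' x ^ 1) / (phi' x ^ 2) ^ 2)).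
    apply is_derive_inv; [apply is_derive_pow, phi'_derive | apply pow_nonzero; auto].
Qed.

Let h_derive x : a0 <= x -> is_derive_C h x (h' x).
Proof.
  intros Hx.
  pose proof (is_derive_Cmult _ _ x _ _
    (is_derive_Cmult (fun _ => - Ci)%C (fun y => RtoC (r y)) x _ _
       (is_derive_const (K:=R_AbsRing) (V:=C_R_NormedModule) _ x)
       (is_derive_RtoC r x _ (r_derive x Hx)))
    (is_derive_expi phi x _ (phi_derive x))) as Hd.
  change (@zero C_R_NormedModule) with (RtoC 0) in Hd.
  assert (Hp : p x = r x * phi' x) by (unfold r; field; auto).
  match type of Hd with is_derive_C _ _ ?l => replace (h' x) with l; [exact Hd|] end.
  unfold h'. rewrite Hp, RtoC_mult. apply injective_projections; simpl; ring.
Qed.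

Let h'_continuous x : a0 <= x -> continuous_C h' x.
Proof.
  intros Hx. unfold h'. continuous_C_tac; eauto using continuous_of_is_derive.
Qed.

Let Cmod_h x : Cmod (h x) = Rabs (r x).
Proof. unfold h. rewrite !Cmod_mult, Cmod_expi, Cmod_opp, Cmod_Ci, Cmod_R. ring. Qed.

Let Cmod_h'_le x b : a0 <= x <= b -> Cmod (h' x) <= b + c2.
Proof.
  intros Hx. unfold h'. eapply Rle_trans; [apply Cmod_sub_le|].
  rewrite !Cmod_mult, Cmod_expi, Cmod_Ci, !Cmod_R, !Rmult_1_r, Rmult_1_l.
  apply Rplus_le_compat; [eapply Rle_trans; [apply p_bound|]; lra|].
  eapply Rle_trans; [apply r'_bound; lra|].
  assert (1 <= x ^ 2) by nra. pose proof c2_nonneg.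
  apply (Rle_trans _ (c2 / 1)); [|lra]. apply Rmult_le_compat_l; [lra|].
  apply Rinv_le_contravar; lra.
Qed.


Let A_B_nonneg : 0 <= A /\ 0 <= B := W1inf0mu_bound_nonneg mu A B u Hu.

Let u_continuous x : continuous_C u x.
Proof. apply (W1inf0mu_bound_continuous mu A B); [lra | exact Hu]. Qed.

Let correction x := (Ci * RtoC (r' x) * expi (phi x))%C.

Let correction_continuous x : a0 <= x -> continuous_C correction x.
Proof. intros Hx. unfold correction. continuous_C_tac; eauto using continuous_of_is_derive. Qed.

Let ex_RInt_times_u (g : R -> C) a b : a <= b -> (forall x, a <= x <= b -> continuous_C g x) ->
  ex_CRInt (fun x => g x * u x)%C a b.
Proof.
  intros Hab Hg. apply (ex_RInt_continuous (V:=C_R_CompleteNormedModule)). intros z Hz.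
  rewrite Rmin_left, Rmax_right in Hz by lra. apply continuous_Cmult; auto.
Qed.

Let RInt_decreasing_weight_le a b : a0 <= a -> a <= b ->
  RInt (fun x => / (lam * x) * jbr_negpow mu x) a b <= / (lam * mu) * Rpower a (- mu).
Proof.
  intros Ha Hab.
  rewrite (RInt_ext _ (fun x => scal (/ lam) (jbr_negpow mu x / x))).
  2: { intros x Hx. rewrite Rmin_left, Rmax_right in Hx by lra.
       unfold scal; simpl; unfold mult; simpl. field. split; lra. }
  rewrite (RInt_scal (V:=R_CompleteNormedModule)).
  - unfold scal; simpl; unfold mult; simpl.
    replace (/ (lam * mu) * Rpower a (- mu)) with (/ lam * (Rpower a (- mu) / mu)) by (field; lra).
    apply Rmult_le_compat_l; [left; apply Rinv_0_lt_compat, Hlam|].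
    apply RInt_jbr_negpow_div_le; lra.
  - apply (ex_RInt_continuous (V:=R_CompleteNormedModule)). intros z Hz.
    rewrite Rmin_left, Rmax_right in Hz by lra.
    apply (continuous_mult (K:=R_AbsRing)); [apply jbr_negpow_continuous|].
    apply (continuous_of_is_derive _ _ (- / z ^ 2)). auto_derive; [lra | field; lra].
Qed.

Let Cmod_RInt_h'u_le a b : a0 <= a -> a <= b ->
  Cmod (CRInt (fun x => h' x * u x)%C a b) <= 2 / lam * A * / a + B * (/ (lam * mu) * Rpower a (- mu)).
Proof.
  intros Ha Hab. destruct A_B_nonneg as [HA HB].
  assert (Hibp : Cmod (CRInt (fun x => h' x * u x) a b - (h b * u b - h a * u a))%C
                 <= B * RInt (fun x => / (lam * x) * jbr_negpow mu x) a b).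
  { apply (Cmod_RInt_by_parts_le h h' u (fun x => / (lam * x)) (jbr_negpow mu) a b B (b + c2));
      try apply Hu; auto.
    - intros x Hx. apply h_derive; lra.
    - intros x Hx. apply h'_continuous; lra.
    - intros x Hx. apply Cmod_h'_le; lra.
    - intros x Hx. rewrite Cmod_h. apply r_bound; lra.
    - intros x Hx. apply (continuous_of_is_derive _ _ (- lam / (lam * x) ^ 2)).
      auto_derive; [nra | field; nra].
    - intros x y Hx Hxy Hy. apply Rinv_le_contravar; nra.
    - apply jbr_negpow_continuous.
    - intros x. split; [left; apply jbr_negpow_pos | apply jbr_negpow_le_1; lra]. }
  assert (Hboundary : Cmod (h b * u b - h a * u a)%C <= 2 / lam * A * / a).
  { eapply Rle_trans; [apply Cmod_sub_le|]. rewrite !Cmod_mult, !Cmod_h.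
    assert (Hrb : Rabs (r b) <= / (lam * a))
      by (eapply Rle_trans; [apply r_bound; lra | apply Rinv_le_contravar; nra]).
    assert (Hra : Rabs (r a) <= / (lam * a)) by (apply r_bound; lra).
    replace (2 / lam * A * / a) with (A * / (lam * a) + A * / (lam * a)) by (field; lra).
    pose proof (proj1 Hu) as HuA.
    apply Rplus_le_compat; rewrite Rmult_comm; apply Rmult_le_compat; auto using Cmod_ge_0, Rabs_pos. }
  pose proof (RInt_decreasing_weight_le a b Ha Hab).
  replace (CRInt (fun x => h' x * u x)%C a b)
    with ((CRInt (fun x => h' x * u x) a b - (h b * u b - h a * u a)) + (h b * u b - h a * u a))%C
    by ring_C.
  eapply Rle_trans; [apply Cmod_triangle|].
  assert (B * RInt (fun x => / (lam * x) * jbr_negpow mu x) a b <= B * (/ (lam * mu) * Rpower a (- mu)))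
    by (apply Rmult_le_compat_l; auto).
  lra.
Qed.

Let Cmod_RInt_correction_le a b : a0 <= a -> a <= b ->
  Cmod (CRInt (fun x => correction x * u x)%C a b) <= c2 * A * / a.
Proof.
  intros Ha Hab. destruct A_B_nonneg as [HA HB].
  assert (Hex : ex_RInt (fun x => / x ^ 2) a b).
  { apply (ex_RInt_continuous (V:=R_CompleteNormedModule)). intros z Hz.
    rewrite Rmin_left, Rmax_right in Hz by lra.
    apply (continuous_of_is_derive _ _ (- 2 * z / z ^ 4)). auto_derive; [nra | field; lra]. }
  eapply Rle_trans; [apply (Cmod_RInt_le _ (fun x => scal (c2 * A) (/ x ^ 2)))|].
  - lra.
  - apply ex_RInt_times_u; [lra|]. intros x Hx. apply correction_continuous. lra.
  - apply (ex_RInt_scal (V:=R_CompleteNormedModule)), Hex.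
  - intros x Hx. change (scal (c2 * A) (/ x ^ 2)) with (c2 * A * / x ^ 2). unfold correction.
    rewrite !Cmod_mult, Cmod_Ci, Cmod_R, Cmod_expi.
    pose proof (r'_bound x ltac:(lra)). pose proof (proj1 Hu x).
    replace (c2 * A * / x ^ 2) with (c2 / x ^ 2 * A) by (field; lra).
    replace (1 * Rabs (r' x) * 1 * Cmod (u x)) with (Rabs (r' x) * Cmod (u x)) by ring.
    apply Rmult_le_compat; auto using Rabs_pos, Cmod_ge_0.
  - rewrite (RInt_scal (V:=R_CompleteNormedModule)) by exact Hex.
    unfold scal; simpl; unfold mult; simpl.
    apply Rmult_le_compat_l; [apply Rmult_le_pos; auto | apply RInt_inv_sqr_le; lra].
Qed.

Theorem Cmod_RInt_nonstationary_phase_le a b : a0 <= a -> a <= b ->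
  Cmod (CRInt (fun x => RtoC (p x) * expi (phi x) * u x)%C a b)
  <= (A + B) * nonstationary_const * decay mu a.
Proof.
  intros Ha Hab. destruct A_B_nonneg as [HA HB].
  rewrite (RInt_ext (V:=C_R_CompleteNormedModule) _
    (fun x => @plus C_R_CompleteNormedModule (h' x * u x)%C (correction x * u x)%C))
    by (intros x _; unfold h', correction; change (plus ?x ?y) with (x + y)%C; ring_C).
  rewrite (RInt_plus (V:=C_R_CompleteNormedModule))
    by (apply ex_RInt_times_u; [lra|]; intros x Hx;
        first [apply h'_continuous | apply correction_continuous]; lra).
  eapply Rle_trans; [apply Cmod_triangle|].
  pose proof (Cmod_RInt_h'u_le a b Ha Hab). pose proof (Cmod_RInt_correction_le a b Ha Hab).
  unfold decay, nonstationary_const. fold c2.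
  assert (0 < / a) by (apply Rinv_0_lt_compat; lra).
  assert (0 < Rpower a (- mu)) by apply exp_pos.
  assert (0 < 2 / lam) by (apply Rdiv_lt_0_compat; lra).
  assert (0 < / (lam * mu)) by (apply Rinv_0_lt_compat; nra).
  pose proof c2_nonneg.
  set (ia := / a) in *. set (E := Rpower a (- mu)) in *. set (m := / (lam * mu)) in *.
  set (l := 2 / lam) in *.
  assert (Hrest : 0 <= A * (l + c2) * E + A * m * (ia + E) + B * (l + c2) * (ia + E) + B * m * ia)
    by (repeat apply Rplus_le_le_0_compat; repeat apply Rmult_le_pos; lra).
  replace ((A + B) * (l + c2 + m) * (ia + E))
    with (A * (l + c2) * ia + B * m * E
          + (A * (l + c2) * E + A * m * (ia + E) + B * (l + c2) * (ia + E) + B * m * ia)) by ring.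
  lra.
Qed.

End NonStationaryPhase.

Lemma nonstationary_const_pos mu lam Lam : 0 < mu -> 0 < lam -> 0 <= Lam ->
  0 < nonstationary_const mu lam Lam.
Proof.
  intros Hmu Hlam HLam. unfold nonstationary_const.
  assert (0 < 2 / lam) by (apply Rdiv_lt_0_compat; lra).
  assert (0 < / lam) by (apply Rinv_0_lt_compat; lra).
  assert (0 <= Lam / lam ^ 2) by (apply Rdiv_le_0_compat; [lra | apply pow_lt; lra]).
  assert (0 < / (lam * mu)) by (apply Rinv_0_lt_compat, Rmult_lt_0_compat; lra).
  lra.
Qed.




(* An arbitrary value when [int_0^N f] does not converge. *)
Definition improper_RInt0 (f : R -> C) : C :=
  epsilon (inhabits (RtoC 0))
    (fun l => filterlim (fun N => CRInt f 0 N) (Rbar_locally p_infty) (@locally C_R_NormedModule l)).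

Section ImproperIntegral.

Variables (mu a0 K : R) (f : R -> C).
Hypothesis Hmu : 0 < mu.
Hypothesis HK : 0 <= K.
Hypothesis f_continuous : forall x, continuous_C f x.
Hypothesis f_tail : forall a b, a0 <= a -> a <= b -> Cmod (CRInt f a b) <= K * decay mu a.

Let RInt_Chasles_C a b c : CRInt f a c = (CRInt f a b + CRInt f b c)%C.
Proof.
  symmetry. apply (RInt_Chasles (V:=C_R_CompleteNormedModule));
    apply (ex_RInt_continuous (V:=C_R_CompleteNormedModule)); auto.
Qed.

Let Cmod_RInt_sub_le a b : a0 <= a -> a0 <= b ->
  Cmod (CRInt f 0 b - CRInt f 0 a) <= K * decay mu (Rmin a b).
Proof.
  intros Ha Hb. rewrite (RInt_Chasles_C 0 a b).
  replace (CRInt f 0 a + CRInt f a b - CRInt f 0 a)%C with (CRInt f a b) by ring_C.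
  destruct (Rle_or_lt a b).
  - rewrite Rmin_left by lra. apply f_tail; lra.
  - rewrite Rmin_right by lra.
    rewrite <- (opp_RInt_swap (V:=C_R_CompleteNormedModule))
      by (apply (ex_RInt_continuous (V:=C_R_CompleteNormedModule)); auto).
    change (Cmod (- CRInt f b a)%C <= K * decay mu b). rewrite Cmod_opp. apply f_tail; lra.
Qed.

Lemma filterlim_improper_RInt0 :
  filterlim (fun N => CRInt f 0 N) (Rbar_locally p_infty) (@locally C_R_NormedModule (improper_RInt0 f)).
Proof.
  apply (epsilon_spec (inhabits (RtoC 0))
    (fun l => filterlim (fun N => CRInt f 0 N) (Rbar_locally p_infty) (@locally C_R_NormedModule l))).
  apply (filterlim_locally_cauchy (U:=C_R_CompleteNormedModule)). intros eps.
  pose proof (cond_pos eps) as Heps.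
  destruct (decay_eventually_le mu (eps / (2 * K + 1)) Hmu) as [a1 [Ha1 Hdecay]];
    [apply Rdiv_lt_0_compat; lra|].
  exists (fun N => Rmax a0 a1 < N). split; [exists (Rmax a0 a1); auto|].
  intros N N' HN HN'. apply ball_C_of_Cmod.
  pose proof (Rmax_l a0 a1). pose proof (Rmax_r a0 a1).
  eapply Rle_lt_trans; [apply Cmod_RInt_sub_le; lra|].
  apply (Rle_lt_trans _ (K * (eps / (2 * K + 1)))).
  - apply Rmult_le_compat_l, Hdecay, Rmin_glb; lra.
  - apply (Rmult_lt_reg_r (2 * K + 1)); [lra|].
    unfold Rdiv. rewrite Rmult_assoc, Rmult_assoc, Rinv_l by lra. nra.
Qed.

Lemma Cmod_improper_RInt0_sub_le a : a0 <= a ->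
  Cmod (improper_RInt0 f - CRInt f 0 a) <= K * decay mu a.
Proof.
  intros Ha. apply (Cmod_sub_le_of_filterlim _ _ _ _ filterlim_improper_RInt0).
  exists a. intros N HN.
  replace (decay mu a) with (decay mu (Rmin a N)) by (rewrite Rmin_left by lra; reflexivity).
  apply Cmod_RInt_sub_le; lra.
Qed.

End ImproperIntegral.


Definition airy_const (mu t0 t1 : R) : R :=
  2 * (1 + / t0) ^ 2 + 4 * nonstationary_const mu (2 * t0) (6 * t1).

Section AiryIntegral.

Variables (mu t0 t1 : R) (w : R -> C) (A B t : R).
Hypothesis Hmu : 0 < mu.
Hypothesis Ht0 : 0 < t0.
Hypothesis Hw : W1inf0mu_bound mu w A B.
Hypothesis Ht : t0 <= t <= t1.

Let amp xi := (RtoC (/ (2 * PI)) * w xi)%C.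
Let phase x xi := x * xi + t * xi ^ 3.
Let f x xi := (expi (phase x xi) * amp xi)%C.
Let folded x xi := (f x xi + f x (- xi))%C.
Let folded_dx x xi := (Ci * RtoC xi * (f x xi - f x (- xi)))%C.

Let Ctail := nonstationary_const mu (2 * t0) (6 * t1).
Let tail_start K := 1 + K / t0.

Let tail_start_ge_1 K : 0 <= K -> 1 <= tail_start K.
Proof. intros HK. unfold tail_start. assert (0 <= K / t0) by (apply Rdiv_le_0_compat; lra). lra. Qed.

Let amp_bound : W1inf0mu_bound mu amp A B.
Proof.
  apply W1inf0mu_bound_scale; auto. rewrite Cmod_R, Rabs_pos_eq.
  - rewrite <- Rinv_1. apply Rinv_le_contravar; pose proof PI2_1; lra.
  - left. apply Rinv_0_lt_compat. pose proof PI_RGT_0; lra.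
Qed.

Let A_B_nonneg : 0 <= A /\ 0 <= B := W1inf0mu_bound_nonneg mu A B w Hw.

Let Ctail_pos : 0 < Ctail.
Proof. apply nonstationary_const_pos; lra. Qed.

Let amp_continuous xi : continuous_C amp xi.
Proof. apply (W1inf0mu_bound_continuous mu A B); [lra | apply amp_bound]. Qed.

Let sign_phase_continuous sg x xi : continuous (fun y => sg * phase x y) xi.
Proof. eapply continuous_of_is_derive. unfold phase. auto_derive; auto. Qed.

Let f_continuous x xi : continuous_C (f x) xi.
Proof.
  unfold f. continuous_C_tac; [|apply amp_continuous].
  eapply continuous_of_is_derive. unfold phase. auto_derive; auto.
Qed.

Let f_opp x xi : f x (- xi) = (expi (- phase x xi) * amp (- xi))%C.
Proof. unfold f, phase. do 2 f_equal. ring. Qed.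

Let f_opp_continuous x xi : continuous_C (fun y => f x (- y)) xi.
Proof. apply continuous_C_comp_opp, f_continuous. Qed.

Let Cmod_f_le x xi : Cmod (f x xi) <= A.
Proof. unfold f. rewrite Cmod_mult, Cmod_expi, Rmult_1_l. apply amp_bound. Qed.

Let phase_tail_le (sg : R) (p p' : R -> R) (u : R -> C) x K a b :
  sg * sg = 1 -> Rabs x <= K -> W1inf0mu_bound mu u A B ->
  (forall xi, is_derive p xi (p' xi)) -> (forall xi, continuous p' xi) ->
  (forall xi, 1 <= xi -> Rabs (p xi) <= xi) -> (forall xi, 1 <= xi -> Rabs (p' xi) <= 1) ->
  tail_start K <= a -> a <= b ->
  Cmod (CRInt (fun xi => RtoC (p xi) * expi (sg * phase x xi) * u xi)%C a b)
  <= (A + B) * Ctail * decay mu a.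
Proof.
  intros Hsg HxK Hu Hp Hp'c Hpb Hp'b Ha Hab.
  assert (HK : 0 <= K) by (eapply Rle_trans; [apply Rabs_pos | exact HxK]).
  assert (HM0 : 1 <= tail_start K) by (apply tail_start_ge_1; exact HK).
  assert (Hsg_abs : Rabs sg = 1).
  { assert (Rabs sg * Rabs sg = 1) by (rewrite <- Rabs_mult, Hsg; apply Rabs_R1).
    pose proof (Rabs_pos sg). nra. }
  apply (Cmod_RInt_nonstationary_phase_le mu (2 * t0) (6 * t1) (tail_start K) A B
    (fun xi => sg * phase x xi) (fun xi => sg * (x + 3 * t * xi ^ 2)) (fun xi => sg * (6 * t * xi))
    p p' u); auto; try lra.
  - intros xi. unfold phase. auto_derive; auto. ring.
  - intros xi. auto_derive; auto. ring.
  - intros xi. eapply continuous_of_is_derive. auto_derive; auto.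
  - intros xi Hxi. rewrite Rabs_mult, Hsg_abs, Rmult_1_l.
    assert (HKxi : K <= t0 * xi).
    { unfold tail_start in Hxi. apply (Rmult_le_compat_l t0) in Hxi; [|lra].
      replace (t0 * (1 + K / t0)) with (t0 + K) in Hxi by (field; lra). lra. }
    assert (Hxi1 : 1 <= xi) by lra.
    assert (Hx : - K <= x) by (pose proof (Rabs_le_between x K) as [[H _] _]; auto).
    assert (t0 * xi <= t0 * xi ^ 2) by nra.
    rewrite Rabs_pos_eq; nra.
  - intros xi Hxi. rewrite !Rabs_mult, Hsg_abs, !Rabs_pos_eq; nra.
  - intros xi Hxi. apply Hpb. lra.
  - intros xi Hxi. apply Hp'b. lra.
Qed.

Let folded_tail_le x K a b : Rabs x <= K -> tail_start K <= a -> a <= b ->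
  Cmod (CRInt (folded x) a b) <= 2 * (A + B) * Ctail * decay mu a.
Proof.
  intros HxK Ha Hab.
  rewrite (RInt_ext (V:=C_R_CompleteNormedModule) _ (fun xi => @plus C_R_CompleteNormedModule
    (RtoC 1 * expi (1 * phase x xi) * amp xi)%C (RtoC 1 * expi (-1 * phase x xi) * amp (- xi))%C)).
  2: { intros xi _. unfold folded. rewrite f_opp. unfold f.
       replace (1 * phase x xi) with (phase x xi) by ring.
       replace (-1 * phase x xi) with (- phase x xi) by ring.
       change (plus ?u ?v) with (u + v)%C. ring_C. }
  rewrite (RInt_plus (V:=C_R_CompleteNormedModule))
    by (apply (ex_RInt_continuous (V:=C_R_CompleteNormedModule)); intros;
        continuous_C_tac; auto using amp_continuous, continuous_C_comp_opp, sign_phase_continuous).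
  eapply Rle_trans; [apply Cmod_triangle|].
  replace (2 * (A + B) * Ctail * decay mu a)
    with ((A + B) * Ctail * decay mu a + (A + B) * Ctail * decay mu a) by ring.
  apply Rplus_le_compat; apply (phase_tail_le _ (fun _ => 1) (fun _ => 0)) with (K := K); auto;
    try apply W1inf0mu_bound_reflect; try lra; try apply amp_bound.
  all: try (intros; auto_derive; auto; fail); try (intros; apply continuous_const).
  all: intros; rewrite ?Rabs_R1, ?Rabs_R0; lra.
Qed.

Let folded_dx_tail_le x K a b : Rabs x <= K -> tail_start K <= a -> a <= b ->
  Cmod (CRInt (folded_dx x) a b) <= 2 * (A + B) * Ctail * decay mu a.
Proof.
  intros HxK Ha Hab.
  rewrite (RInt_ext (V:=C_R_CompleteNormedModule) _ (fun xi => @plus C_R_CompleteNormedModule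
    (RtoC xi * expi (1 * phase x xi) * (Ci * amp xi))%C
    (RtoC xi * expi (-1 * phase x xi) * (- Ci * amp (- xi)))%C)).
  2: { intros xi _. unfold folded_dx. rewrite f_opp. unfold f.
       replace (1 * phase x xi) with (phase x xi) by ring.
       replace (-1 * phase x xi) with (- phase x xi) by ring.
       change (plus ?u ?v) with (u + v)%C. ring_C. }
  rewrite (RInt_plus (V:=C_R_CompleteNormedModule))
    by (apply (ex_RInt_continuous (V:=C_R_CompleteNormedModule)); intros;
        continuous_C_tac;
        auto using amp_continuous, continuous_C_comp_opp, sign_phase_continuous, continuous_id).
  eapply Rle_trans; [apply Cmod_triangle|].
  replace (2 * (A + B) * Ctail * decay mu a)
    with ((A + B) * Ctail * decay mu a + (A + B) * Ctail * decay mu a) by ring.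
  apply Rplus_le_compat; apply (phase_tail_le _ (fun xi => xi) (fun _ => 1)) with (K := K); auto;
    try apply W1inf0mu_bound_scale; try apply W1inf0mu_bound_reflect; try apply amp_bound;
    try rewrite ?Cmod_opp, Cmod_Ci; try lra.
  all: try (intros; auto_derive; auto; fail); try (intros; apply continuous_const).
  all: intros; rewrite ?Rabs_R1, ?Rabs_pos_eq; lra.
Qed.

Let folded_continuous x xi : continuous_C (folded x) xi.
Proof. unfold folded. apply continuous_Cplus; [apply f_continuous | apply f_opp_continuous]. Qed.

Let folded_dx_continuous x xi : continuous_C (folded_dx x) xi.
Proof.
  unfold folded_dx. continuous_C_tac; auto using continuous_id.
Qed.

Let tail_const_nonneg : 0 <= 2 * (A + B) * Ctail.
Proof. destruct A_B_nonneg. pose proof Ctail_pos. apply Rmult_le_pos; lra. Qed.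

Let v x := improper_RInt0 (folded x).
Let v' x := improper_RInt0 (folded_dx x).

Let v_sub_le x K a : Rabs x <= K -> tail_start K <= a ->
  Cmod (v x - CRInt (folded x) 0 a) <= 2 * (A + B) * Ctail * decay mu a.
Proof.
  intros HxK Ha. apply (Cmod_improper_RInt0_sub_le mu (tail_start K)); auto.
  intros. apply (folded_tail_le x K); auto.
Qed.

Let v'_sub_le x K a : Rabs x <= K -> tail_start K <= a ->
  Cmod (v' x - CRInt (folded_dx x) 0 a) <= 2 * (A + B) * Ctail * decay mu a.
Proof.
  intros HxK Ha. apply (Cmod_improper_RInt0_sub_le mu (tail_start K)); auto.
  intros. apply (folded_dx_tail_le x K); auto.
Qed.

Let airy_integrand_eq x xi : airy_integrand w t x xi = f x xi.
Proof.
  unfold airy_integrand, f, amp, phase. rewrite scal_R_Cmult. unfold Rdiv. rewrite Rmult_1_l. ring.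
Qed.

Let v_osc_integral x : osc_integral_is (airy_integrand w t x) (v x).
Proof.
  unfold osc_integral_is.
  apply (filterlim_ext (fun N => CRInt (folded x) 0 N)).
  - intros N. rewrite (RInt_ext (V:=C_R_CompleteNormedModule) (airy_integrand w t x) (f x))
      by (intros y _; exact (airy_integrand_eq x y)).
    symmetry. apply RInt_symmetric_C, f_continuous.
  - apply (filterlim_improper_RInt0 mu (tail_start (Rabs x)) (2 * (A + B) * Ctail)); auto.
    intros. apply (folded_tail_le x (Rabs x)); auto. lra.
Qed.

Let f_shift y k xi : f (y + k) xi = (expi (k * xi) * f y xi)%C.
Proof.
  unfold f, phase. replace ((y + k) * xi + t * xi ^ 3) with (k * xi + (y * xi + t * xi ^ 3)) by ring.
  rewrite expi_add. ring.
Qed.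

Let folded_taylor_le y k xi : Rabs (k * xi) <= 1 ->
  Cmod (folded (y + k) xi - folded y xi - RtoC k * folded_dx y xi) <= 4 * A * (k * xi) ^ 2.
Proof.
  intros Hkxi.
  assert (E : (folded (y + k) xi - folded y xi - RtoC k * folded_dx y xi)%C =
    (f y xi * (expi (k * xi) - 1 - Ci * RtoC (k * xi))
     + f y (- xi) * (expi (k * - xi) - 1 - Ci * RtoC (k * - xi)))%C).
  { unfold folded, folded_dx. rewrite !f_shift, !RtoC_mult, RtoC_opp. ring. }
  rewrite E. eapply Rle_trans; [apply Cmod_triangle|]. rewrite !Cmod_mult.
  assert (T1 := Cmod_expi_sub_taylor_le (k * xi) Hkxi).
  assert (T2 := Cmod_expi_sub_taylor_le (k * - xi)
    ltac:(rewrite <- Ropp_mult_distr_r, Rabs_Ropp; exact Hkxi)).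
  replace ((k * - xi) ^ 2) with ((k * xi) ^ 2) in T2 by ring.
  pose proof (Cmod_f_le y xi). pose proof (Cmod_f_le y (- xi)).
  pose proof (Cmod_ge_0 (f y xi)). pose proof (Cmod_ge_0 (f y (- xi))).
  pose proof (Cmod_ge_0 (expi (k * xi) - 1 - Ci * RtoC (k * xi))%C).
  pose proof (Cmod_ge_0 (expi (k * - xi) - 1 - Ci * RtoC (k * - xi))%C).
  assert (0 <= (k * xi) ^ 2) by apply pow2_ge_0. nra.
Qed.

Let RInt_folded_derive y d : 0 <= d ->
  is_derive_C (fun z => CRInt (folded z) 0 d) y (CRInt (folded_dx y) 0 d).
Proof.
  intros Hd. destruct A_B_nonneg as [HA _].
  apply (is_derive_RInt_param_C folded folded_dx y 0 d (4 * A * d ^ 2) (/ (d + 1))); auto.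
  - apply Rmult_le_pos; [lra | apply pow2_ge_0].
  - apply Rinv_0_lt_compat. lra.
  - intros k xi Hk Hxi.
    assert (Hkd : Rabs k * (d + 1) <= 1).
    { apply (Rmult_le_reg_r (/ (d + 1))); [apply Rinv_0_lt_compat; lra|].
      rewrite Rmult_assoc, Rinv_r, Rmult_1_r, Rmult_1_l by lra. lra. }
    pose proof (Rabs_pos k).
    assert (Hkxi : Rabs (k * xi) <= Rabs k * d) by (rewrite Rabs_mult, (Rabs_pos_eq xi) by lra; nra).
    eapply Rle_trans; [apply folded_taylor_le; nra|].
    replace ((k * xi) ^ 2) with (Rabs (k * xi) ^ 2) by apply pow2_abs.
    replace (4 * A * d ^ 2 * k ^ 2) with (4 * A * (Rabs k * d) ^ 2) by (rewrite <- (pow2_abs k); ring).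
    apply Rmult_le_compat_l; [lra|]. apply pow_incr. split; [apply Rabs_pos | exact Hkxi].
Qed.

Let v_derive x0 : is_derive_C v x0 (v' x0).
Proof.
  set (K := Rabs x0 + 1). set (Kc := 2 * (A + B) * Ctail).
  apply (is_derive_C_uniform_limit (fun n y => CRInt (folded y) 0 (INR n))
    (fun n y => CRInt (folded_dx y) 0 (INR n)) v v' x0 (mkposreal 1 Rlt_0_1)).
  - intros n y _. apply RInt_folded_derive, pos_INR.
  - intros eps Heps.
    destruct (decay_eventually_le mu (eps / (Kc + 1)) Hmu) as [a1 [Ha1 Hdecay]];
      [apply Rdiv_lt_0_compat; unfold Kc; lra|].
    destruct (INR_unbounded (Rmax (tail_start K) a1)) as [N HN].
    exists N. intros n y Hn Hy.
    assert (HyK : Rabs y <= K).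
    { unfold Boule in Hy. simpl in Hy. unfold K.
      replace y with (x0 + (y - x0)) by ring. eapply Rle_trans; [apply Rabs_triang | lra]. }
    assert (Hn' : Rmax (tail_start K) a1 <= INR n)
      by (apply Rle_trans with (INR N); [lra | apply le_INR, Hn]).
    pose proof (Rmax_l (tail_start K) a1). pose proof (Rmax_r (tail_start K) a1).
    assert (Hsmall : Kc * decay mu (INR n) < eps).
    { apply (Rle_lt_trans _ (Kc * (eps / (Kc + 1)))).
      - apply Rmult_le_compat_l; [exact tail_const_nonneg | apply Hdecay; lra].
      - apply (Rmult_lt_reg_r (Kc + 1)); [unfold Kc; lra|]. unfold Rdiv.
        rewrite Rmult_assoc, Rmult_assoc, Rinv_l by (unfold Kc; lra). unfold Kc. nra. }
    split; (eapply Rle_lt_trans; [|exact Hsmall]);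
      [apply (v_sub_le y K) | apply (v'_sub_le y K)]; auto; lra.
Qed.

Let Cmod_RInt_folded_le x M : 1 <= M -> Cmod (CRInt (folded x) 0 M) <= 2 * A * M ^ 2.
Proof.
  intros HM. destruct A_B_nonneg as [HA _].
  apply (Rle_trans _ ((M - 0) * (2 * A))); [|assert (M <= M ^ 2) by nra; nra].
  apply Cmod_RInt_le_const; [lra | apply (ex_RInt_continuous (V:=C_R_CompleteNormedModule)); auto|].
  intros xi _. unfold folded. eapply Rle_trans; [apply Cmod_triangle|].
  pose proof (Cmod_f_le x xi). pose proof (Cmod_f_le x (- xi)). lra.
Qed.

Let Cmod_RInt_folded_dx_le x M : 1 <= M -> Cmod (CRInt (folded_dx x) 0 M) <= 2 * A * M ^ 2.
Proof.
  intros HM. destruct A_B_nonneg as [HA _].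
  apply (Rle_trans _ ((M - 0) * (M * (2 * A)))); [|right; ring].
  apply Cmod_RInt_le_const; [lra | apply (ex_RInt_continuous (V:=C_R_CompleteNormedModule)); auto|].
  intros xi Hxi. unfold folded_dx. rewrite !Cmod_mult, Cmod_Ci, Cmod_R, Rabs_pos_eq, Rmult_1_l by lra.
  apply Rmult_le_compat; [lra | apply Cmod_ge_0 | lra|].
  eapply Rle_trans; [apply Cmod_sub_le|].
  pose proof (Cmod_f_le x xi). pose proof (Cmod_f_le x (- xi)). lra.
Qed.

Let Cmod_le_airy_const (g : R -> C) (I : C) Rr : 1 <= Rr ->
  Cmod (CRInt g 0 (tail_start Rr)) <= 2 * A * tail_start Rr ^ 2 ->
  Cmod (I - CRInt g 0 (tail_start Rr)) <= 2 * (A + B) * Ctail * decay mu (tail_start Rr) ->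
  Cmod I <= airy_const mu t0 t1 * Rr ^ 2 * (A + B).
Proof.
  intros HR Hhead Htail. destruct A_B_nonneg as [HA HB]. pose proof Ctail_pos.
  assert (HM : 1 <= tail_start Rr) by (apply tail_start_ge_1; lra).
  assert (Hdecay := decay_le_2 mu (tail_start Rr) (Rlt_le _ _ Hmu) HM).
  assert (0 <= decay mu (tail_start Rr)) by (apply decay_nonneg; lra).
  assert (Hit : 0 < / t0) by (apply Rinv_0_lt_compat; lra).
  assert (HMR : tail_start Rr ^ 2 <= (1 + / t0) ^ 2 * Rr ^ 2).
  { rewrite <- Rpow_mult_distr. apply pow_incr. unfold tail_start, Rdiv. nra. }
  replace I with ((I - CRInt g 0 (tail_start Rr)) + CRInt g 0 (tail_start Rr))%C by ring_C.
  eapply Rle_trans; [apply Cmod_triangle|]. unfold airy_const. fold Ctail.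
  assert (1 <= Rr ^ 2) by nra.
  assert (2 * (A + B) * Ctail * decay mu (tail_start Rr) <= 4 * Ctail * (A + B) * Rr ^ 2).
  { apply (Rle_trans _ (2 * (A + B) * Ctail * 2)); [apply Rmult_le_compat_l; nra | nra]. }
  assert (2 * A * tail_start Rr ^ 2 <= 2 * (1 + / t0) ^ 2 * Rr ^ 2 * (A + B)).
  { assert (0 <= (1 + / t0) ^ 2 * Rr ^ 2) by (apply Rmult_le_pos; apply pow2_ge_0). nra. }
  nra.
Qed.

Lemma airy_W1inf_local_bound Rr : 1 <= Rr ->
  exists v : R -> C,
    (forall x, osc_integral_is (airy_integrand w t x) (v x)) /\
    (forall x, - Rr <= x <= Rr ->
       Cmod (v x) <= airy_const mu t0 t1 * Rr ^ 2 * (A + B) /\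
       exists dv : C, is_derive_C v x dv /\ Cmod dv <= airy_const mu t0 t1 * Rr ^ 2 * (A + B)).
Proof.
  intros HR. exists v. split; [exact v_osc_integral|].
  intros x Hx. assert (HxR : Rabs x <= Rr) by (apply Rabs_le; lra).
  assert (HM : 1 <= tail_start Rr) by (apply tail_start_ge_1; lra).
  split.
  - apply (Cmod_le_airy_const (folded x) (v x) Rr HR);
      [apply Cmod_RInt_folded_le, HM | apply (v_sub_le x Rr); auto; lra].
  - exists (v' x). split; [apply v_derive|].
    apply (Cmod_le_airy_const (folded_dx x) (v' x) Rr HR);
      [apply Cmod_RInt_folded_dx_le, HM | apply (v'_sub_le x Rr); auto; lra].
Qed.

End AiryIntegral.

Theorem lemma5p1 (mu t0 t1 : R) (Hmu : 0 < mu) (Ht0 : 0 < t0) (Ht01 : t0 < t1) :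
  exists C0 : R, 0 < C0 /\
  forall (w : R -> C) (A B : R), W1inf0mu_bound mu w A B ->
  forall (Rr t : R), 1 <= Rr -> t0 <= t <= t1 ->
  exists v : R -> C,
    (forall x, osc_integral_is (airy_integrand w t x) (v x)) /\
    (forall x, - Rr <= x <= Rr ->
       Cmod (v x) <= C0 * Rr ^ 2 * (A + B) /\
       exists dv : C, @is_derive R_AbsRing C_R_NormedModule v x dv /\ Cmod dv <= C0 * Rr ^ 2 * (A + B)).
Proof.
  exists (airy_const mu t0 t1). split.
  - unfold airy_const.
    pose proof (nonstationary_const_pos mu (2 * t0) (6 * t1) Hmu ltac:(lra) ltac:(lra)).
    assert (0 <= (1 + / t0) ^ 2) by apply pow2_ge_0. lra.
  - intros w A B Hw Rr t HR Ht. exact (airy_W1inf_local_bound mu t0 t1 w A B t Hmu Ht0 Hw Ht Rr HR).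
Qed.
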